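(* In QHC: (a) for every problem $\alpha$ and proposition $q$, setting $p=?\alpha$: $(!p\to !q)\Leftrightarrow\, !(p\to q)$; (b) for all problems $\alpha$ and propositions $q$, setting $\beta=!q$: $(\nabla\alpha\to\beta)\Leftrightarrow(\alpha\to\beta)\Leftrightarrow\nabla(\alpha\to\beta)$; (c) for every problem $\alpha$ and proposition $q$, setting $p=?\alpha$: $(p\to\Box q)\Rightarrow(p\to q)$, and $p\to q\ \vdash\ p\to\Box q$.
   Context: QHC is a two-sorted first-order calculus. Its only terms are individual variables. Every formula is either a problem (denoted by Greek letters $\alpha,\beta,\gamma,\dots$) or a proposition (denoted by Latin letters $p,q,\dots$). Atomic formulas are proposition variables $p(t_1,\dots,t_n)$ (of proposition type), problem variables $\pi(t_1,\dots,t_n)$ (of problem type), and the constants $0$ (a proposition, classical falsity) and $\bot$ (a problem, intuitionistic absurdity). Propositions are closed under the classical connectives $\land,\lor,\to$ and quantifiers $\exists,\forall$; problems are closed under the intuitionistic connectives $\land,\lor,\to$ and quantifiers $\exists,\forall$ (the same symbols are used, distinguished by the type of the arguments). $\neg p$ abbreviates $p\to 0$, $\neg\alpha$ abbreviates $\alpha\to\bot$, and $\leftrightarrow$ is defined as usual. There are two type-conversion operators: if $p$ is a proposition then $!p$ is a problem, and if $\alpha$ is a problem then $?\alpha$ is a proposition. Deductive system of QHC: all axioms and rules of classical predicate logic applied to all propositions; all postulates and rules of intuitionistic predicate logic applied to all problems; the rules $p\,/\,!p$ and $\alpha\,/\,?\alpha$; and the schemas $?!p\to p$; $\alpha\to\,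 !?\alpha$; $!(p\to q)\to(!p\to !q)$; $?(\alpha\to\beta)\to(?\alpha\to ?\beta)$; $!0\to\bot$; $?(\alpha\land\beta)\leftrightarrow ?\alpha\land ?\beta$; $?(\alpha\lor\beta)\leftrightarrow ?\alpha\lor ?\beta$; $?\bot\to 0$; $?\exists x\,\alpha(x)\leftrightarrow\exists x\,?\alpha(x)$; $?\forall x\,\alpha(x)\to\forall x\,?\alpha(x)$ (usual variable side conditions implicit). $\vdash A$ means $A$ is derivable in QHC; $A\Rightarrow B$ means $\vdash A\to B$ and $A\Leftrightarrow B$ means $\vdash A\leftrightarrow B$ (with $A,B$ of the same type); $A\vdash B$ means $B$ is derivable in QHC from the premise $A$. Notation: $\Box p := ?!p$ (a proposition) and $\nabla\alpha := !?\alpha$ (a problem). QC and QH denote classical and intuitionistic predicate calculus. *)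

From Stdlib Require Import List Arith Bool.
Import ListNotations.

Inductive prop : Type :=
| PVar (P : nat) (ts : list nat)
| PFalse
| PAnd (p q : prop)
| POr (p q : prop)
| PImp (p q : prop)
| PEx (x : nat) (p : prop)
| PAll (x : nat) (p : prop)
| PQ (a : prob)                    (* ?alpha *)
with prob : Type :=
| QVar (P : nat) (ts : list nat)
| QBot
| QAnd (a b : prob)
| QOr (a b : prob)
| QImp (a b : prob)
| QEx (x : nat) (a : prob)
| QAll (x : nat) (a : prob)
| QB (p : prop).                   (* !p *)

Inductive fm : Type := FP (p : prop) | FQ (a : prob).

Definition PIff (p q : prop) : prop := PAnd (PImp p q) (PImp q p).
Definition QIff (a b : prob) : prob := QAnd (QImp a b) (QImp b a).
Definition PNeg (p : prop) : prop := PImp p PFalse.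
Definition QNeg (a : prob) : prob := QImp a QBot.

Definition Box (p : prop) : prop := PQ (QB p).
Definition Nabla (a : prob) : prob := QB (PQ a).

Fixpoint occ_p (x : nat) (p : prop) : bool :=
  match p with
  | PVar _ ts => existsb (Nat.eqb x) ts
  | PFalse => false
  | PAnd p q | POr p q | PImp p q => occ_p x p || occ_p x q
  | PEx z p | PAll z p => if Nat.eqb z x then false else occ_p x p
  | PQ a => occ_q x a
  end
with occ_q (x : nat) (a : prob) : bool :=
  match a with
  | QVar _ ts => existsb (Nat.eqb x) ts
  | QBot => false
  | QAnd a b | QOr a b | QImp a b => occ_q x a || occ_q x b
  | QEx z a | QAll z a => if Nat.eqb z x then false else occ_q x a
  | QB p => occ_p x p
  end.

Definition rn (x y t : nat) : nat := if Nat.eqb t x then y else t.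

(* sub_p x y p : replace free occurrences of x by y (naive) *)
Fixpoint sub_p (x y : nat) (p : prop) : prop :=
  match p with
  | PVar P ts => PVar P (map (rn x y) ts)
  | PFalse => PFalse
  | PAnd p q => PAnd (sub_p x y p) (sub_p x y q)
  | POr p q => POr (sub_p x y p) (sub_p x y q)
  | PImp p q => PImp (sub_p x y p) (sub_p x y q)
  | PEx z p => if Nat.eqb z x then PEx z p else PEx z (sub_p x y p)
  | PAll z p => if Nat.eqb z x then PAll z p else PAll z (sub_p x y p)
  | PQ a => PQ (sub_q x y a)
  end
with sub_q (x y : nat) (a : prob) : prob :=
  match a with
  | QVar P ts => QVar P (map (rn x y) ts)
  | QBot => QBot
  | QAnd a b => QAnd (sub_q x y a) (sub_q x y b)
  | QOr a b => QOr (sub_q x y a) (sub_q x y b)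
  | QImp a b => QImp (sub_q x y a) (sub_q x y b)
  | QEx z a => if Nat.eqb z x then QEx z a else QEx z (sub_q x y a)
  | QAll z a => if Nat.eqb z x then QAll z a else QAll z (sub_q x y a)
  | QB p => QB (sub_p x y p)
  end.

(* ff_p y x p : y is free for x in p (no capture when substituting y for x) *)
Fixpoint ff_p (y x : nat) (p : prop) : Prop :=
  match p with
  | PVar _ _ | PFalse => True
  | PAnd p q | POr p q | PImp p q => ff_p y x p /\ ff_p y x q
  | PEx z p | PAll z p =>
      if Nat.eqb z x then True else ((occ_p x p = true -> z <> y) /\ ff_p y x p)
  | PQ a => ff_q y x a
  end
with ff_q (y x : nat) (a : prob) : Prop :=
  match a with
  | QVar _ _ | QBot => True
  | QAnd a b | QOr a b | QImp a b => ff_q y x a /\ ff_q y x b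
  | QEx z a | QAll z a =>
      if Nat.eqb z x then True else ((occ_q x a = true -> z <> y) /\ ff_q y x a)
  | QB p => ff_p y x p
  end.

(* Der G A : A is derivable in QHC from the set of premises G
   (all rules may be applied to premises as well). *)
Inductive Der (G : fm -> Prop) : fm -> Prop :=
| d_hyp A : G A -> Der G A
| c_K p q : Der G (FP (PImp p (PImp q p)))
| c_S p q r : Der G (FP (PImp (PImp p (PImp q r)) (PImp (PImp p q) (PImp p r))))
| c_andI p q : Der G (FP (PImp p (PImp q (PAnd p q))))
| c_andE1 p q : Der G (FP (PImp (PAnd p q) p))
| c_andE2 p q : Der G (FP (PImp (PAnd p q) q))
| c_orI1 p q : Der G (FP (PImp p (POr p q)))
| c_orI2 p q : Der G (FP (PImp q (POr p q)))
| c_orE p q r : Der G (FP (PImp (PImp p r) (PImp (PImp q r) (PImp (POr p q) r))))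
| c_efq p : Der G (FP (PImp PFalse p))
| c_dne p : Der G (FP (PImp (PNeg (PNeg p)) p))
| c_allE x y p : ff_p y x p -> Der G (FP (PImp (PAll x p) (sub_p x y p)))
| c_exI x y p : ff_p y x p -> Der G (FP (PImp (sub_p x y p) (PEx x p)))
| c_mp p q : Der G (FP (PImp p q)) -> Der G (FP p) -> Der G (FP q)
| c_gen x c p : occ_p x c = false ->
    Der G (FP (PImp c p)) -> Der G (FP (PImp c (PAll x p)))
| c_exE x p c : occ_p x c = false ->
    Der G (FP (PImp p c)) -> Der G (FP (PImp (PEx x p) c))
| i_K a b : Der G (FQ (QImp a (QImp b a)))
| i_S a b c : Der G (FQ (QImp (QImp a (QImp b c)) (QImp (QImp a b) (QImp a c))))
| i_andI a b : Der G (FQ (QImp a (QImp b (QAnd a b))))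
| i_andE1 a b : Der G (FQ (QImp (QAnd a b) a))
| i_andE2 a b : Der G (FQ (QImp (QAnd a b) b))
| i_orI1 a b : Der G (FQ (QImp a (QOr a b)))
| i_orI2 a b : Der G (FQ (QImp b (QOr a b)))
| i_orE a b c : Der G (FQ (QImp (QImp a c) (QImp (QImp b c) (QImp (QOr a b) c))))
| i_efq a : Der G (FQ (QImp QBot a))
| i_allE x y a : ff_q y x a -> Der G (FQ (QImp (QAll x a) (sub_q x y a)))
| i_exI x y a : ff_q y x a -> Der G (FQ (QImp (sub_q x y a) (QEx x a)))
| i_mp a b : Der G (FQ (QImp a b)) -> Der G (FQ a) -> Der G (FQ b)
| i_gen x c a : occ_q x c = false ->
    Der G (FQ (QImp c a)) -> Der G (FQ (QImp c (QAll x a)))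
| i_exE x a c : occ_q x c = false ->
    Der G (FQ (QImp a c)) -> Der G (FQ (QImp (QEx x a) c))
| r_bang p : Der G (FP p) -> Der G (FQ (QB p))
| r_quest a : Der G (FQ a) -> Der G (FP (PQ a))
| x_qb p : Der G (FP (PImp (PQ (QB p)) p))
| x_bq a : Der G (FQ (QImp a (QB (PQ a))))
| x_bK p q : Der G (FQ (QImp (QB (PImp p q)) (QImp (QB p) (QB q))))
| x_qK a b : Der G (FP (PImp (PQ (QImp a b)) (PImp (PQ a) (PQ b))))
| x_b0 : Der G (FQ (QImp (QB PFalse) QBot))
| x_qand a b : Der G (FP (PIff (PQ (QAnd a b)) (PAnd (PQ a) (PQ b))))
| x_qor a b : Der G (FP (PIff (PQ (QOr a b)) (POr (PQ a) (PQ b))))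
| x_qbot : Der G (FP (PImp (PQ QBot) PFalse))
| x_qex x a : Der G (FP (PIff (PQ (QEx x a)) (PEx x (PQ a))))
| x_qall x a : Der G (FP (PImp (PQ (QAll x a)) (PAll x (PQ a)))).

Definition Thm (A : fm) : Prop := Der (fun _ => False) A.
Definition DerFrom (A B : fm) : Prop := Der (fun C => C = A) B.


(* Everything follows from a few derived rules of the
   two Hilbert calculi together with the modal behaviour of the conversions:
   ! and ? are monotone (necessitation + K), ?α -> □?α and □p -> p.
   For a problem α and a proposition q the implications
       (α -> !q) => ∇(α -> !q) => !(?α -> q) => (∇α -> !q) => (α -> !q)
   form a cycle, so the four problems are pairwise equivalent; parts (a) and (b)
   are three of these equivalences.  Part (c) combines □q -> q with the rule
   "from p -> q infer □p -> □q" and ?α -> □?α. *)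

Section Derivations.
Variable G : fm -> Prop.

Lemma q_syl a b c :
  Der G (FQ (QImp a b)) -> Der G (FQ (QImp b c)) -> Der G (FQ (QImp a c)).
Proof.
  intros Hab Hbc. eapply i_mp; [eapply i_mp; [apply i_S|] | exact Hab].
  eapply i_mp; [apply i_K | exact Hbc].
Qed.

Lemma p_syl p q r :
  Der G (FP (PImp p q)) -> Der G (FP (PImp q r)) -> Der G (FP (PImp p r)).
Proof.
  intros Hpq Hqr. eapply c_mp; [eapply c_mp; [apply c_S|] | exact Hpq].
  eapply c_mp; [apply c_K | exact Hqr].
Qed.

Lemma p_post p q r : Der G (FP (PImp q r)) -> Der G (FP (PImp (PImp p q) (PImp p r))).
Proof. intros Hqr. eapply c_mp; [apply c_S|]. eapply c_mp; [apply c_K | exact Hqr]. Qed.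

Lemma q_compose a b c : Der G (FQ (QImp (QImp b c) (QImp (QImp a b) (QImp a c)))).
Proof. eapply q_syl; [apply i_K | apply i_S]. Qed.

Lemma q_pre a b c : Der G (FQ (QImp a b)) -> Der G (FQ (QImp (QImp b c) (QImp a c))).
Proof.
  intros Hab. eapply i_mp; [eapply i_mp; [apply i_S | apply q_compose]|].
  eapply i_mp; [apply i_K | exact Hab].
Qed.

Lemma q_iff_intro a b :
  Der G (FQ (QImp a b)) -> Der G (FQ (QImp b a)) -> Der G (FQ (QIff a b)).
Proof. intros Hab Hba. eapply i_mp; [eapply i_mp; [apply i_andI | exact Hab] | exact Hba]. Qed.

Lemma bang_mono p q : Der G (FP (PImp p q)) -> Der G (FQ (QImp (QB p) (QB q))).
Proof. intros Hpq. eapply i_mp; [apply x_bK | apply r_bang; exact Hpq]. Qed.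

Lemma quest_mono a b : Der G (FQ (QImp a b)) -> Der G (FP (PImp (PQ a) (PQ b))).
Proof. intros Hab. eapply c_mp; [apply x_qK | apply r_quest; exact Hab]. Qed.

Lemma box_mono p q : Der G (FP (PImp p q)) -> Der G (FP (PImp (Box p) (Box q))).
Proof. intros Hpq. apply quest_mono, bang_mono, Hpq. Qed.

Lemma quest_to_box a : Der G (FP (PImp (PQ a) (Box (PQ a)))).
Proof. apply quest_mono, x_bq. Qed.

Lemma quest_imp_bang a q : Der G (FP (PImp (PQ (QImp a (QB q))) (PImp (PQ a) q))).
Proof. eapply p_syl; [apply x_qK | apply p_post, x_qb]. Qed.

Lemma nabla_imp_bang a q : Der G (FQ (QImp (Nabla (QImp a (QB q))) (QB (PImp (PQ a) q)))).
Proof. apply bang_mono, quest_imp_bang. Qed.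

Lemma nabla_imp_elim a b : Der G (FQ (QImp (QImp (Nabla a) b) (QImp a b))).
Proof. apply q_pre, x_bq. Qed.

End Derivations.

Theorem proposition2p13 :
  forall (a : prob) (q : prop),
    (* (a) with p = ?a : (!p -> !q) <=> !(p -> q) *)
    Thm (FQ (QIff (QImp (QB (PQ a)) (QB q)) (QB (PImp (PQ a) q))))
    (* (b) with beta = !q : (Nabla a -> beta) <=> (a -> beta) <=> Nabla (a -> beta) *)
    /\ Thm (FQ (QIff (QImp (Nabla a) (QB q)) (QImp a (QB q))))
    /\ Thm (FQ (QIff (QImp a (QB q)) (Nabla (QImp a (QB q)))))
    (* (c) with p = ?a : (p -> Box q) => (p -> q), and p -> q |- p -> Box q *)
    /\ Thm (FP (PImp (PImp (PQ a) (Box q)) (PImp (PQ a) q)))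
    /\ DerFrom (FP (PImp (PQ a) q)) (FP (PImp (PQ a) (Box q))).
Proof.
  intros a q. unfold Thm, DerFrom.
  pose proof (x_bq (fun _ => False) (QImp a (QB q))) as to_nabla.
  pose proof (nabla_imp_bang (fun _ => False) a q) as to_bang.
  pose proof (x_bK (fun _ => False) (PQ a) q) as to_nabla_imp.
  pose proof (nabla_imp_elim (fun _ => False) a (QB q)) as to_imp.
  repeat split.
  - apply q_iff_intro; [| exact to_nabla_imp].
    eapply q_syl; [exact to_imp | eapply q_syl; [exact to_nabla | exact to_bang]].
  - apply q_iff_intro; [exact to_imp |].
    eapply q_syl; [exact to_nabla | eapply q_syl; [exact to_bang | exact to_nabla_imp]].
  - apply q_iff_intro; [exact to_nabla |].
    eapply q_syl; [exact to_bang | eapply q_syl; [exact to_nabla_imp | exact to_imp]].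
  - apply p_post, x_qb.
  - eapply p_syl; [apply quest_to_box | apply box_mono, d_hyp; reflexivity].
Qed.
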